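(* Let $R$ be a right artinian ring. Then every factor ring $\bar R$ of $R$ has the property that every right $\bar R$-module of finite length is a homomorphic image of an injective right $\bar R$-module if and only if every factor ring of $R$ is QF.
   Context: A ring is QF if it is right noetherian and right self-injective. *)

From mathcomp Require Import all_boot all_algebra.
Set Implicit Arguments. Unset Strict Implicit. Unset Printing Implicit Defensive.
Import GRing.Theory.
Local Open Scope ring_scope.

(* Rings are unital, possibly noncommutative (pzRingType allows the zero ring,
   which is the factor ring R/R).  A RIGHT S-module is a left module over the
   converse ring S^c, i.e. an [lmodType S^c]: a *: m stands for m.a . *)

Definition subset_of (T : Type) (A B : T -> Prop) := forall x, A x -> B x.
Definition same_set (T : Type) (A B : T -> Prop) := forall x, A x <-> B x.

Definition right_ideal (S : pzRingType) (I : S -> Prop) :=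
  [/\ I 0, (forall x y, I x -> I y -> I (x + y)) &
      (forall x r, I x -> I (x * r))].

Definition right_artinian (S : pzRingType) :=
  forall I : nat -> S -> Prop,
    (forall n, right_ideal (I n)) ->
    (forall n, subset_of (I n.+1) (I n)) ->
    exists N, forall n, (N <= n)%N -> same_set (I n) (I N).

Definition right_noetherian (S : pzRingType) :=
  forall I : nat -> S -> Prop,
    (forall n, right_ideal (I n)) ->
    (forall n, subset_of (I n) (I n.+1)) ->
    exists N, forall n, (N <= n)%N -> same_set (I n) (I N).

Definition rhom (S : pzRingType) (A B : lmodType S^c) (f : A -> B) := linear f.

Definition injective_module (S : pzRingType) (E : lmodType S^c) :=
  forall (A B : lmodType S^c) (f : A -> B) (g : A -> E),
    rhom f -> injective f -> rhom g ->
    exists h : B -> E, rhom h /\ (forall a, h (f a) = g a).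

(* Right self-injective: S_S (the regular right module, (S^c)^o) is injective. *)
Definition right_self_injective (S : pzRingType) :=
  injective_module ((S^c)^o : lmodType S^c).

Definition QF (S : pzRingType) := right_noetherian S /\ right_self_injective S.

Definition submodule (S : pzRingType) (M : lmodType S^c) (N : M -> Prop) :=
  [/\ N 0, (forall x y, N x -> N y -> N (x + y)) &
      (forall (a : S^c) x, N x -> N (a *: x))].

Definition finite_length (S : pzRingType) (M : lmodType S^c) :=
  exists (n : nat) (C : nat -> M -> Prop),
    [/\ forall i, submodule (C i),
        same_set (C 0%N) (fun x => x = 0),
        same_set (C n) (fun _ => True) &
        forall i, (i < n)%N ->
          [/\ subset_of (C i) (C i.+1),
              ~ subset_of (C i.+1) (C i) &
              forall N : M -> Prop, submodule N ->
                subset_of (C i) N -> subset_of N (C i.+1) ->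
                same_set N (C i) \/ same_set N (C i.+1)]].

Definition image_of_injective (S : pzRingType) (M : lmodType S^c) :=
  exists (E : lmodType S^c) (p : E -> M),
    injective_module E /\ rhom p /\ (forall m, exists e, p e = m).

Definition fl_images_of_injectives (S : pzRingType) :=
  forall M : lmodType S^c, finite_length M -> image_of_injective M.

(* A factor ring of R is represented (up to isomorphism) as the codomain of a
   surjective ring homomorphism R -> S. *)
Definition factor_ring (R S : pzRingType) (f : {rmorphism R -> S}) :=
  forall s : S, exists r : R, f r = s.

From mathcomp Require Import all_boot all_algebra.
From mathcomp Require Import boolp classical_sets.
Set Implicit Arguments. Unset Strict Implicit. Unset Printing Implicit Defensive.
Import GRing.Theory.
Local Open Scope classical_set_scope.
Local Open Scope ring_scope.

(* Both directions go through the regular module S_S.  If S is right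
   self-injective, a module of finite length is finitely generated, hence an
   image of some S^n, which is injective.  Conversely, if S_S has finite length
   it is an image p : E ->> S_S of an injective module; a preimage of 1 splits
   p, so S_S is a retract of E and is injective.  Factor rings of a right
   artinian ring are right artinian, and the Hopkins-Levitzki argument gives
   both the noetherian half of QF and the finite length of S_S: the Jacobson
   radical J is a finite intersection of maximal right ideals and is nilpotent,
   and each layer J^n / J^(n+1), being killed by J, is a sum of simple modules,
   which has a composition series by the descending chain condition. *)

Lemma subset_seq_le (T : Type) (I : nat -> set T) : (forall n, I n `<=` I n.+1) ->
  {homo I : m n / (m <= n)%N >-> m `<=` n}.
Proof. exact: homo_leq (@subset_refl T) (@subset_trans T). Qed.

Lemma subset_seq_ge (T : Type) (I : nat -> set T) : (forall n, I n.+1 `<=` I n) ->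
  {homo I : m n / (m <= n)%N >-> n `<=` m}.
Proof.
by apply: homo_leq => [A|B A C BA CB]; [exact: subset_refl|exact: subset_trans BA].
Qed.

(** * Right ideals *)

Section RightIdeals.
Variable S : pzRingType.
Implicit Types (A B C F G I K M N X Y : set S) (x y z s t : S).

Lemma rideal0 I : right_ideal I -> I 0. Proof. by case. Qed.

Lemma ridealD I x y : right_ideal I -> I x -> I y -> I (x + y).
Proof. by case=> _ + _; apply. Qed.

Lemma ridealMr I x s : right_ideal I -> I x -> I (x * s).
Proof. by case=> _ _; apply. Qed.

Lemma ridealN I x : right_ideal I -> I x -> I (- x).
Proof. by move=> Iid Ix; rewrite -mulrN1; apply: ridealMr. Qed.

Lemma ridealB I x y : right_ideal I -> I x -> I y -> I (x - y).
Proof. by move=> Iid Ix Iy; apply: ridealD (ridealN _ _). Qed.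

Lemma rideal_eqT I : right_ideal I -> I 1 -> I = setT.
Proof.
move=> Iid I1; apply/seteqP; split=> // x _.
by rewrite -(mul1r x); apply: ridealMr.
Qed.

Lemma rideal_setT : right_ideal [set: S]. Proof. by []. Qed.

Lemma rideal_set0 : right_ideal [set 0 : S].
Proof. by split=> [|x y -> ->|x s ->] /=; rewrite ?addr0 ?mul0r. Qed.

Lemma rideal_setI A B : right_ideal A -> right_ideal B -> right_ideal (A `&` B).
Proof.
move=> Aid Bid; split=> [|x y [Ax Bx] [Ay By]|x s [Ax Bx]]; split.
all: by [apply: rideal0|apply: ridealD|apply: ridealMr].
Qed.

Lemma rideal_bigcup (T : Type) (D : set T) (G : T -> set S) : D !=set0 ->
  (forall i, D i -> right_ideal (G i)) ->
  (forall i j, D i -> D j -> G i `<=` G j \/ G j `<=` G i) ->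
  right_ideal (\bigcup_(i in D) G i).
Proof.
move=> [i0 Di0] Gid Gtot; split.
- by exists i0 => //; apply: rideal0 (Gid _ Di0).
- move=> x y [i Di Gix] [j Dj Gjy].
  case: (Gtot i j Di Dj) => [ij|ji].
    by exists j => //; apply: ridealD (Gid _ Dj) (ij _ Gix) Gjy.
  by exists i => //; apply: ridealD (Gid _ Di) Gix (ji _ Gjy).
- by move=> x s [i Di Gix]; exists i => //; apply: ridealMr (Gid _ Di) Gix.
Qed.

Lemma rideal_smallest G : right_ideal (smallest (@right_ideal S) G).
Proof.
split=> [K [Kid _]|x y Gx Gy K KG|x s Gx K KG]; first exact: rideal0.
  exact: ridealD KG.1 (Gx K KG) (Gy K KG).
exact: ridealMr KG.1 (Gx K KG).
Qed.

Definition plus_set A B : set S := [set a + b | a in A & b in B].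

Lemma rideal_plus A B : right_ideal A -> right_ideal B -> right_ideal (plus_set A B).
Proof.
move=> Aid Bid; split.
- by exists 0; [apply: rideal0|exists 0; [apply: rideal0|rewrite addr0]].
- move=> _ _ [a Aa [b Bb <-]] [a' Aa' [b' Bb' <-]].
  exists (a + a'); first exact: ridealD.
  by exists (b + b'); [apply: ridealD|rewrite addrACA].
- move=> _ s [a Aa [b Bb <-]]; exists (a * s); first exact: ridealMr.
  by exists (b * s); [apply: ridealMr|rewrite mulrDl].
Qed.

Lemma plus_setl A B : right_ideal B -> A `<=` plus_set A B.
Proof.
by move=> Bid a Aa; exists a => //; exists 0; [apply: rideal0|rewrite addr0].
Qed.

Lemma plus_setr A B : right_ideal A -> B `<=` plus_set A B.
Proof.
by move=> Aid b Bb; exists 0; [apply: rideal0|exists b => //; rewrite add0r].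
Qed.

Lemma plus_setS A A' B : A `<=` A' -> plus_set A B `<=` plus_set A' B.
Proof. by move=> AA' _ [a Aa [b Bb <-]]; exists a; [apply: AA'|exists b]. Qed.

Lemma plus_set_sub A B C : right_ideal C -> A `<=` C -> B `<=` C ->
  plus_set A B `<=` C.
Proof. by move=> Cid AC BC _ [a /AC Ca [b /BC Cb <-]]; apply: ridealD. Qed.

Lemma rideal_image_mull z I : right_ideal I -> right_ideal [set z * y | y in I].
Proof.
move=> Iid; split.
- by exists 0; [apply: rideal0|rewrite mulr0].
- move=> _ _ [y Iy <-] [y' Iy' <-].
  by exists (y + y'); [apply: ridealD|rewrite mulrDr].
- by move=> _ s [y Iy <-]; exists (y * s); [apply: ridealMr|rewrite mulrA].
Qed.

Definition principal z : set S := [set z * s | s in [set: S]].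

Lemma rideal_principal z : right_ideal (principal z).
Proof. exact: rideal_image_mull. Qed.

Lemma principal_id z : principal z z.
Proof. by exists 1; rewrite ?mulr1. Qed.

Lemma principal_sub I z : right_ideal I -> I z -> principal z `<=` I.
Proof. by move=> Iid Iz _ [s _ <-]; apply: ridealMr. Qed.

Definition colon A z : set S := [set s | A (z * s)].

Lemma rideal_colon A z : right_ideal A -> right_ideal (colon A z).
Proof.
move=> Aid; split; rewrite /colon /=.
- by rewrite mulr0; apply: rideal0.
- by move=> x y Ax Ay; rewrite mulrDr; apply: ridealD.
- by move=> x s Ax; rewrite mulrA; apply: ridealMr.
Qed.

Definition ideal_mul X Y := smallest (@right_ideal S) [set x * y | x in X & y in Y].

Lemma rideal_mul X Y : right_ideal (ideal_mul X Y).
Proof. exact: rideal_smallest. Qed.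

Lemma ideal_mul_mem X Y x y : X x -> Y y -> ideal_mul X Y (x * y).
Proof. by move=> Xx Yy; apply: sub_gen_smallest; exists x => //; exists y. Qed.

Lemma ideal_mulS X X' Y : X `<=` X' -> ideal_mul X Y `<=` ideal_mul X' Y.
Proof.
move=> XX'; apply: smallest_sub; first exact: rideal_mul.
by move=> _ [x Xx [y Yy <-]]; apply: ideal_mul_mem => //; apply: XX'.
Qed.

Lemma ideal_mul_subl X Y : right_ideal X -> ideal_mul X Y `<=` X.
Proof. by move=> Xid; apply: smallest_sub => // _ [x Xx [y _ <-]]; apply: ridealMr. Qed.

Lemma ideal_mul_setT X : X `<=` ideal_mul X setT.
Proof. by move=> x Xx; rewrite -(mulr1 x); apply: ideal_mul_mem. Qed.

Lemma ideal_mulA_sub X Y Z : (forall s z, Z z -> Z (s * z)) ->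
  ideal_mul (ideal_mul X Y) Z `<=` ideal_mul X (ideal_mul Y Z).
Proof.
move=> Zl; set XYZ := ideal_mul X (ideal_mul Y Z).
pose K := [set u | forall z, Z z -> XYZ (u * z)].
have Kid : right_ideal K.
  split=> [z _|u v Ku Kv z Zz|u s Ku z Zz].
  - by rewrite mul0r; apply: rideal0 (rideal_mul _ _).
  - by rewrite mulrDl; apply: ridealD (rideal_mul _ _) (Ku z Zz) (Kv z Zz).
  - by rewrite -mulrA; apply: Ku; apply: Zl.
have XYK : ideal_mul X Y `<=` K.
  apply: smallest_sub => // _ [x Xx [y Yy <-]] z Zz.
  by rewrite -mulrA; apply: ideal_mul_mem => //; apply: ideal_mul_mem.
apply: smallest_sub; first exact: rideal_mul.
by move=> _ [u /XYK Ku [z Zz <-]]; apply: Ku.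
Qed.

Fixpoint ideal_pow I n := if n is n.+1 then ideal_mul (ideal_pow I n) I else setT.

Lemma rideal_pow I n : right_ideal (ideal_pow I n).
Proof. by case: n => [|n]; [exact: rideal_setT|exact: rideal_mul]. Qed.

Lemma ideal_pow_add I m n : (forall s y, I y -> I (s * y)) ->
  ideal_pow I (m + n) `<=` ideal_mul (ideal_pow I m) (ideal_pow I n).
Proof.
move=> Il; elim: n => [|n IH]; first by rewrite addn0; apply: ideal_mul_setT.
by rewrite addnS; apply: subset_trans (ideal_mulS IH) (ideal_mulA_sub Il).
Qed.

(** * Composition chains *)

Definition covers A B := [/\ right_ideal A, right_ideal B, A `<` B &
  forall N, right_ideal N -> A `<=` N -> N `<=` B -> N = A \/ N = B].

Inductive comp_chain : set S -> set S -> Prop :=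
| comp_chain_refl A : right_ideal A -> comp_chain A A
| comp_chain_cover A B C : comp_chain A B -> covers B C -> comp_chain A C.

Lemma comp_chain_sub A B :
  comp_chain A B -> [/\ right_ideal A, right_ideal B & A `<=` B].
Proof.
elim=> [A0 A0id|A0 B0 C0 _ [A0id _ A0B0] [_ C0id /properW B0C0 _]]; first by split.
by split=> //; apply: subset_trans B0C0.
Qed.

Lemma comp_chain_trans A B C : comp_chain A B -> comp_chain B C -> comp_chain A C.
Proof.
move=> chAB chBC; elim: chBC chAB => // B0 C0 D0 _ IH covCD chAB.
exact: comp_chain_cover (IH chAB) covCD.
Qed.

Lemma modular_eq X Y B : right_ideal X -> right_ideal Y -> right_ideal B ->
  X `<=` Y -> X `&` B = Y `&` B -> plus_set X B = plus_set Y B -> X = Y.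
Proof.
move=> Xid Yid Bid XY XB_YB XB_YB'; apply/seteqP; split=> // y Yy.
have : plus_set Y B y by apply: plus_setl.
rewrite -XB_YB' => -[x Xx [b Bb xb_y]].
have : (Y `&` B) b.
  by split=> //; rewrite -(addKr x b) xb_y addrC; apply: ridealB => //; apply: XY.
by rewrite -XB_YB -xb_y => -[Xb _]; apply: ridealD.
Qed.

Lemma covers_chain_stable B C (I : nat -> set S) : covers B C ->
  (forall n, right_ideal (I n)) -> (forall n, I n `<=` I n.+1) ->
  (forall n, B `<=` I n /\ I n `<=` C) ->
  exists k, forall n, (k <= n)%N -> I n = I k.
Proof.
move=> [_ _ _ BCmin] Iid Iup IBC.
have [[k Ik]|noC] := pselect (exists k, I k = C).
  exists k => n kn; apply/seteqP; split; last exact: (subset_seq_le Iup) _ _ kn.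
  by rewrite Ik; apply: (IBC n).2.
exists 0%N => n _.
have IB j : I j = B.
  by have [//|Ij] := BCmin (I j) (Iid j) (IBC j).1 (IBC j).2; case: noC; exists j.
by rewrite !IB.
Qed.

Lemma comp_chain_acc A B : comp_chain A B -> forall I : nat -> set S,
  (forall n, right_ideal (I n)) -> (forall n, I n `<=` I n.+1) ->
  (forall n, A `<=` I n /\ I n `<=` B) ->
  exists k, forall n, (k <= n)%N -> I n = I k.
Proof.
elim=> [A0 _|A0 B0 C0 chAB IH covBC] I Iid Iup IAB.
  have IA n : I n = A0 by apply/seteqP; split; [apply: (IAB n).2|apply: (IAB n).1].
  by exists 0%N => n _; rewrite !IA.
have [_ Bid AB] := comp_chain_sub chAB.
have [_ Cid /properW BC _] := covBC.
have [k1 Ik1] := IH (fun n => I n `&` B0) (fun n => rideal_setI (Iid n) Bid)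
  (fun n => setSI (Iup n))
  (fun n => conj (fun x Ax => conj ((IAB n).1 x Ax) (AB x Ax)) (@subIsetr _ _ _)).
have [k2 Ik2] := covers_chain_stable (I := fun n => plus_set (I n) B0) covBC
  (fun n => rideal_plus (Iid n) Bid) (fun n => plus_setS (Iup n))
  (fun n => conj (plus_setr (Iid n)) (plus_set_sub Cid (IAB n).2 BC)).
exists (maxn k1 k2) => n le_kn; apply/esym/(@modular_eq _ _ B0) => //.
- exact: (subset_seq_le Iup) _ _ le_kn.
- have E j : (k1 <= j)%N -> I j `&` B0 = I k1 `&` B0 := Ik1 j.
  by rewrite !E ?leq_maxl // (leq_trans (leq_maxl _ _) le_kn).
- have E j : (k2 <= j)%N -> plus_set (I j) B0 = plus_set (I k2) B0 := Ik2 j.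
  by rewrite !E ?leq_maxr // (leq_trans (leq_maxr _ _) le_kn).
Qed.

Lemma comp_chain_series A B : comp_chain A B -> exists n (C : nat -> set S),
  [/\ forall i, right_ideal (C i), C 0%N = A, C n = B &
      forall i, (i < n)%N -> covers (C i) (C i.+1)].
Proof.
elim=> [A0 A0id|A0 B0 C0 _ [n [C [Cid C0A CnB Ccov]]] covBC].
  by exists 0%N, (fun=> A0).
have [_ C0id _ _] := covBC.
exists n.+1, (fun i => if i == n.+1 then C0 else C i); split=> [i|||i].
- by case: eqP.
- done.
- by rewrite eqxx.
rewrite ltnS leq_eqVlt => /predU1P[->|lt_in]; first by rewrite eqxx ltn_eqF // CnB.
rewrite eqSS (ltn_eqF lt_in) (ltn_eqF (leq_trans lt_in (leqnSn n))).
exact: Ccov.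
Qed.

(** * Maximal right ideals *)

Definition maximal M := covers M setT.

Lemma maximal_rideal M : maximal M -> right_ideal M. Proof. by case. Qed.

Lemma maximal_not1 M : maximal M -> ~ M 1.
Proof. by move=> [Mid _ [_ nTM] _] /(rideal_eqT Mid) MT; apply: nTM; rewrite MT. Qed.

Lemma maximal_plus_principal M x : maximal M -> ~ M x ->
  plus_set M (principal x) = setT.
Proof.
move=> [Mid _ _ Mmax] nMx.
have [Mx_M|//] := Mmax _ (rideal_plus Mid (rideal_principal x))
  (plus_setl (rideal_principal x)) (@subsetT _ _).
by case: nMx; rewrite -Mx_M; apply: plus_setr Mid _ (principal_id x).
Qed.

Lemma exists_maximal P0 : right_ideal P0 -> ~ P0 1 -> exists2 M, maximal M & P0 `<=` M.
Proof.
move=> P0id P0n1; pose proper_over K := [/\ right_ideal K, P0 `<=` K & ~ K 1].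
(* [set0] is added so that the empty chain has an upper bound. *)
pose P := proper_over `|` [set set0].
have chainP (F : set (set S)) :
    F `<=` P -> total_on F subset -> P (\bigcup_(X in F) X).
  move=> FP Ftot.
  have [[X0 FX0 [X0id P0X0 nX01]]|none] := pselect (exists2 X, F X & proper_over X);
    last first.
    right; apply/seteqP; split=> [x [X FX Xx]|//].
    by case: (FP X FX) => [PX|X0]; [case: none; exists X|rewrite -X0].
  have -> : \bigcup_(X in F) X = \bigcup_(X in F `&` proper_over) X.
    apply/seteqP; split=> x [X FX Xx]; exists X => //; last exact: FX.1.
    by split=> //; case: (FP X FX) => // X_0; rewrite X_0 in Xx.
  left; split.
  - apply: rideal_bigcup => [|X [_ []] //|X Y [FX _] [FY _]]; last exact: Ftot.
    by exists X0.
  - by move=> x /P0X0 X0x; exists X0.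
  - by move=> [X [_ [_ _ nX1]]].
have [M [PM Mmax]] := Zorn_bigcup chainP.
case: PM => [[Mid P0M nM1]|M0]; last first.
  have M_P0 : M `<` P0 by rewrite M0; split=> // /(_ 0 (rideal0 P0id)).
  by exfalso; apply: (Mmax P0 M_P0); left; split.
exists M => //; split=> //; first by split=> // TM; apply: nM1; apply: TM.
move=> N Nid MN _; have [N1|nN1] := pselect (N 1); first by right; apply: rideal_eqT.
left; apply/seteqP; split=> //; apply: contrapT => NM.
by apply: (Mmax N); [split|left; split=> //; apply: subset_trans MN].
Qed.

Lemma colon_maximal M s : maximal M -> ~ M s -> maximal (colon M s).
Proof.
move=> Mmax nMs; have Mid := maximal_rideal Mmax.
split=> //; first exact: rideal_colon.
  by split=> // Tcolon; apply: nMs; rewrite -(mulr1 s); apply: Tcolon.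
move=> N Nid colonN _; have [Ncolon|] := pselect (N `<=` colon M s).
  by left; apply/seteqP.
move=> /existsNP[n /not_implyP[Nn nMsn]]; right.
have : plus_set M (principal (s * n)) s by rewrite maximal_plus_principal.
move=> [t Mt [_ [r _ <-]] tsnr]; apply: rideal_eqT => //.
have colon1 : colon M s (1 - n * r).
  by rewrite /colon /= mulrBr mulr1 mulrA -{1}tsnr addrK.
rewrite -(subrK (n * r) 1).
exact: ridealD Nid (colonN _ colon1) (ridealMr _ Nid Nn).
Qed.

Inductive meet_of_maximals : set S -> Prop :=
| meet_maximalsT : meet_of_maximals setT
| meet_maximalsI M K : maximal M -> meet_of_maximals K -> meet_of_maximals (M `&` K).

Lemma meet_maximals_rideal K : meet_of_maximals K -> right_ideal K.
Proof.
elim=> [|M K' Mmax _ K'id]; first exact: rideal_setT.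
exact: rideal_setI (maximal_rideal Mmax) K'id.
Qed.

Lemma meet_maximals_sup K x :
  meet_of_maximals K -> (forall M, maximal M -> M x) -> K x.
Proof.
by move=> Kmeet allx; elim: Kmeet => // M K' Mmax _ K'x; split=> //; apply: allx.
Qed.

(** * Semisimple layers *)

(* The image of z in S / A spans a simple or zero submodule. *)
Definition simple_over A : set S :=
  [set z | exists2 M, maximal M & M `<=` colon A z].

Lemma simple_over_colon A F z s : right_ideal F -> A `<=` F ->
  simple_over A z -> ~ F z -> F (z * s) -> A (z * s).
Proof.
move=> Fid AF [M [_ _ _ Mmax] MAz] nFz Fzs; apply: (MAz).
have [<-//|colonT] := Mmax _ (rideal_colon z Fid)
  (fun t Mt => AF _ (MAz t Mt)) (@subsetT _ _).
by case: nFz; rewrite -(mulr1 z); have : colon F z 1 by rewrite colonT.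
Qed.

Lemma covers_adjoin A F z : right_ideal F -> A `<=` F ->
  simple_over A z -> ~ F z -> covers F (plus_set F (principal z)).
Proof.
move=> Fid AF zsimple nFz; have Fzid := rideal_plus Fid (rideal_principal z).
have Fz_z : plus_set F (principal z) z := plus_setr Fid (principal_id z).
split=> //; first by split; [exact: plus_setl (rideal_principal z)|move/(_ z Fz_z)].
move=> N Nid FN NFz; have [Nz|nNz] := pselect (N z).
  by right; apply/seteqP; split=> //; apply: plus_set_sub Nid FN (principal_sub Nid Nz).
left; apply/seteqP; split=> // n Nn; have [f Ff [_ [s _ <-]] fzs_n] := NFz n Nn.
have Nzs : N (z * s).
  by rewrite -(addKr f (z * s)) fzs_n addrC; apply: ridealB => //; apply: FN.
rewrite -fzs_n; apply: ridealD Fid Ff (AF _ _).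
exact: simple_over_colon Nid (subset_trans AF FN) zsimple nNz Nzs.
Qed.

(* [B `<=` simple_span A B] says that B / A is a sum of simple modules. *)
Definition simple_span A B := smallest (@right_ideal S) (A `|` (B `&` simple_over A)).

Lemma simple_span_meet A B K x : right_ideal A -> right_ideal B ->
  meet_of_maximals K -> B x -> (forall j, K j -> A (x * j)) -> simple_span A B x.
Proof.
move=> Aid Bid Kmeet; elim: Kmeet x => [|M K0 Mmax Kmeet IH] x Bx xK.
  by apply: sub_gen_smallest; left; rewrite -(mulr1 x); apply: xK.
have [Mid K0id] := (maximal_rideal Mmax, meet_maximals_rideal Kmeet).
have [K0M|/existsNP[p /not_implyP[K0p nMp]]] := pselect (K0 `<=` M).
  by apply: IH => // j K0j; apply: xK; split=> //; apply: K0M.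
(* 1 = t + e with t in M and e in K0 splits x into a part simple over A
   through M and a part to which the induction hypothesis applies *)
have : plus_set M (principal p) 1 by rewrite maximal_plus_principal.
move=> [t Mt [_ [s _ <-]] tps1]; set e := p * s in tps1.
have K0e : K0 e by apply: ridealMr.
have Me : M (1 - e) by rewrite -tps1 addrK.
rewrite -(mulr1 x) -(subrK e 1) mulrDr.
apply: ridealD (rideal_smallest _) _ _.
- apply: IH; first exact: ridealMr.
  move=> j K0j; rewrite -mulrA; apply: xK; split; first exact: ridealMr.
  by rewrite mulrBl mul1r; apply: ridealB K0id K0j (ridealMr _ K0id K0e).
- apply: sub_gen_smallest; right; split; first exact: ridealMr.
  exists M => // u Mu; rewrite /colon /= -mulrA; apply: xK; split.
    have -> : e * u = u - (1 - e) * u by rewrite mulrBl mul1r opprB addrC subrK.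
    exact: ridealB Mid Mu (ridealMr _ Mid Me).
  exact: ridealMr.
Qed.

Section SpanFrom.
Variables (A : set S) (z : nat -> S).
Hypothesis Aid : right_ideal A.

Fixpoint span_from a n : set S :=
  if n is n.+1 then plus_set (span_from a n) (principal (z (a + n))) else A.

Lemma rideal_span_from a n : right_ideal (span_from a n).
Proof. by elim: n => //= n IH; apply: rideal_plus IH (rideal_principal _). Qed.

Lemma span_from_le a : {homo span_from a : n k / (n <= k)%N >-> n `<=` k}.
Proof. by apply: subset_seq_le => n; apply: plus_setl (rideal_principal _). Qed.

Lemma sub_span_from a n : A `<=` span_from a n.
Proof. exact: span_from_le (leq0n n). Qed.

Lemma span_from_new a : span_from a 1 (z a).
Proof. by apply: plus_setr Aid _ _; rewrite addn0; apply: principal_id. Qed.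

Lemma span_from_shift a n : span_from a n `<=` span_from 0%N (a + n).
Proof.
elim: n => [|n IH] /=; first exact: sub_span_from.
by rewrite addnS; apply: subset_trans (plus_setS IH) _.
Qed.

Lemma span_from_succ a n : span_from a.+1 n `<=` span_from a n.+1.
Proof.
elim: n => [|n IH] /=; first exact: plus_setl (rideal_principal _).
by rewrite addSnnS; apply: plus_setS.
Qed.

Hypothesis z_simple : forall n, simple_over A (z n).
Hypothesis z_new : forall n, ~ span_from 0%N n (z n).

Lemma span_from_indep a n : span_from 0%N a `&` span_from a n `<=` A.
Proof.
elim: n => [|n IH] x [Fx] //= [h hspan [_ [s _ <-]] xE].
(* the last summand z_(a+n) s of x lies in span_from 0 (a + n), which does not
   contain z_(a+n); hence it lies in A and can be dropped *)
have Fk := rideal_span_from 0%N (a + n).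
have Fax : span_from 0%N (a + n) x by apply: span_from_le (leq_addr n a) _ Fx.
have Fh : span_from 0%N (a + n) h by apply: span_from_shift.
have Fzs : span_from 0%N (a + n) (z (a + n) * s).
  by rewrite -(addKr h (z (a + n) * s)) xE addrC; apply: ridealB.
have Azs := simple_over_colon Fk (sub_span_from 0%N (a + n)) (z_simple _)
  (@z_new _) Fzs.
apply: IH; split=> //; rewrite -xE.
exact: ridealD (rideal_span_from a n) hspan (sub_span_from _ _ Azs).
Qed.

End SpanFrom.
End RightIdeals.

(** * Right artinian rings *)

Section Artinian.
Variable S : pzRingType.
Hypothesis artS : right_artinian S.
Implicit Types (A B I K : set S).

Lemma artinian_stable (I : nat -> set S) : (forall n, right_ideal (I n)) ->
  (forall n, I n.+1 `<=` I n) -> exists k, forall n, (k <= n)%N -> I n = I k.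
Proof.
by move=> Iid Idown; have [k Ik] := artS Iid Idown; exists k => n /Ik /predeqP.
Qed.

Lemma artinian_minimal (P : set (set S)) I0 : right_ideal I0 -> P I0 ->
  exists I, [/\ right_ideal I, P I &
    forall K, right_ideal K -> P K -> K `<=` I -> K = I].
Proof.
move=> I0id PI0; apply: contrapT => nomin.
pose T := {I | right_ideal I /\ P I}.
have smaller (I : T) : {K : T | sval K `<` sval I}.
  apply: cid; case: I => I [Iid PI] /=.
  have [K [Kid PK KI KnI]] : exists K, [/\ right_ideal K, P K, K `<=` I & K <> I].
    apply: contrapT => none; apply: nomin; exists I; split=> // K Kid PK KI.
    by apply: contrapT => KnI; apply: none; exists K.
  exists (exist _ K (conj Kid PK)); split=> // IK; apply: KnI.
  by apply/seteqP; split.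
pose I n := iter n (fun J => sval (smaller J)) (exist _ I0 (conj I0id PI0)).
have [k Ik] := @artinian_stable (fun n => sval (I n)) (fun n => (svalP (I n)).1)
  (fun n => properW (svalP (smaller (I n)))).
have [_ nsub] := svalP (smaller (I k)).
by apply: nsub; have /= -> := Ik k.+1 (leqnSn k).
Qed.

Lemma no_independent_sequence A (z : nat -> S) : right_ideal A ->
  (forall n, simple_over A (z n)) -> ~ (forall n, ~ span_from A z 0%N n (z n)).
Proof.
move=> Aid z_simple z_new.
(* G t = A + z_t S + z_(t+1) S + ... descends; once it is stable,
   z_k lies in G k.+1, against independence *)
pose G t := \bigcup_n span_from A z t n.
have Gid t : right_ideal (G t).
  apply: rideal_bigcup => [|n _|n k _ _]; [by exists 0%N|exact: rideal_span_from|].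
  by case/orP: (leq_total n k) => /span_from_le; [left|right].
have Gdown t : G t.+1 `<=` G t.
  by move=> x [n _ /span_from_succ xn]; exists n.+1.
have [k Gk] := artinian_stable Gid Gdown.
have : G k.+1 (z k) by rewrite Gk //; exists 1%N => //; apply: span_from_new.
move=> [n _ zkn]; apply: (z_new k); apply: sub_span_from.
apply: (span_from_indep (a := k.+1) (n := n) Aid z_simple z_new); split=> //.
by rewrite -addn1; apply: span_from_shift (span_from_new z Aid k).
Qed.

Lemma semisimple_comp_chain A B : right_ideal A -> right_ideal B -> A `<=` B ->
  B `<=` simple_span A B -> comp_chain A B.
Proof.
move=> Aid Bid AB Bspan; apply: contrapT => nochain.
(* otherwise fresh simple elements of B can be adjoined to A forever *)
pose fresh F := [set z | [/\ B z, simple_over A z & ~ F z]].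
have freshP F : comp_chain A F -> F `<=` B -> exists z, fresh F z.
  move=> chAF FB; apply: contrapT => /forallNP nofresh; apply: nochain.
  have [_ Fid AF] := comp_chain_sub chAF.
  suff -> : B = F by [].
  apply/seteqP; split=> //; apply: subset_trans Bspan _.
  apply: smallest_sub => // x [/AF //|[Bx xsimple]].
  by apply: contrapT => nFx; apply: (nofresh x).
pose fix grow n := if n is n.+1
  then plus_set (grow n) (principal (xget 0 (fresh (grow n)))) else A.
pose z n := xget 0 (fresh (grow n)).
have growP n : [/\ comp_chain A (grow n), grow n `<=` B & fresh (grow n) (z n)].
  elim: n => [|n [chn nB zn]].
    have chA : comp_chain A A := comp_chain_refl Aid.
    by split=> //; apply: xgetPex (freshP _ chA AB).
  have [Bz zsimple nz] := zn; have [_ Gid AG] := comp_chain_sub chn.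
  have ch1 : comp_chain A (grow n.+1).
    exact: comp_chain_cover chn (covers_adjoin Gid AG zsimple nz).
  have n1B : grow n.+1 `<=` B := plus_set_sub Bid nB (principal_sub Bid Bz).
  by split=> //; apply: xgetPex (freshP _ ch1 n1B).
have grow_span n : grow n = span_from A z 0%N n by elim: n => //= n <-.
apply: (no_independent_sequence Aid (z := z)) => n.
  by have [_ _ []] := growP n.
by rewrite -grow_span; have [_ _ []] := growP n.
Qed.

Lemma exists_radical :
  exists2 J : set S, meet_of_maximals J & forall M, maximal M -> J `<=` M.
Proof.
have [J [Jid Jmeet Jmin]] := artinian_minimal (@rideal_setT S) (@meet_maximalsT S).
exists J => // M Mmax.
have MJ : M `&` J = J.
  apply: Jmin; [exact: rideal_setI (maximal_rideal Mmax) Jid|exact: meet_maximalsI|].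
  exact: subIsetr.
by rewrite -MJ; apply: subIsetl.
Qed.

Section Radical.
Variable J : set S.
Hypotheses (J_meet : meet_of_maximals J) (J_sub : forall M, maximal M -> J `<=` M).

Lemma radical_mull s y : J y -> J (s * y).
Proof.
move=> Jy; apply: meet_maximals_sup J_meet _ => M Mmax.
have [Ms|nMs] := pselect (M s); first exact: ridealMr (maximal_rideal Mmax) Ms.
exact: J_sub (colon_maximal Mmax nMs) _ Jy.
Qed.

Lemma radical_unit y : J y -> exists v, (1 - y) * v = 1.
Proof.
move=> Jy; apply: contrapT => /forallNP nounit.
have not1 : ~ principal (1 - y) 1 by move=> [v _ /nounit].
have [M Mmax sub] := exists_maximal (rideal_principal (1 - y)) not1.
apply: (maximal_not1 Mmax); rewrite -(subrK y 1).
exact: ridealD (maximal_rideal Mmax) (sub _ (principal_id _)) (J_sub Mmax Jy).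
Qed.

Lemma idempotent_radical_zero I : right_ideal I -> I `<=` J ->
  I `<=` ideal_mul I I -> I `<=` [set 0].
Proof.
move=> Iid IJ II x0 Ix0; apply: contrapT => x0n0.
(* a minimal K with K I <> 0 and a in K with a I <> 0 give a I = K, so a = a y
   with y in J, and a = 0 since 1 - y is right invertible *)
pose nonann K := exists a z, [/\ K a, I z & a * z <> 0].
have nonannT : nonann setT by exists 1, x0; rewrite mul1r.
have [K [Kid [a [z [Ka Iz az]]] Kmin]] := artinian_minimal (rideal_setT S) nonannT.
have [z1 [z2 [Iz1 Iz2 az12]]] : exists z1 z2, [/\ I z1, I z2 & a * (z1 * z2) <> 0].
  apply: contrapT => none; apply: az.
  apply: smallest_sub (rideal_colon a (rideal_set0 S)) _ _ (II z Iz).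
  move=> _ [u Iu [v Iv <-]]; apply: contrapT => auv; apply: none.
  by exists u, v.
have aIK : [set a * y | y in I] = K.
  apply: Kmin; first exact: rideal_image_mull.
    by exists (a * z1), z2; split; [exists z1|..|rewrite -mulrA].
  by move=> _ [y Iy <-]; apply: ridealMr.
have [y Iy ay] : [set a * y | y in I] a by rewrite aIK.
have [v yv] := radical_unit (IJ y Iy).
apply: az; suff -> : a = 0 by rewrite mul0r.
by rewrite -[a]mulr1 -yv mulrA mulrBr mulr1 ay subrr mul0r.
Qed.

Lemma radical_nilpotent : exists k, ideal_pow J k = [set 0].
Proof.
have powJ_down n : ideal_pow J n.+1 `<=` ideal_pow J n.
  exact: ideal_mul_subl (rideal_pow J n).
have [k Jk] := artinian_stable (rideal_pow J) powJ_down.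
exists k.+1; apply/seteqP; split; last by move=> _ ->; apply: rideal0 (rideal_pow _ _).
apply: idempotent_radical_zero; first exact: rideal_pow.
  have J1 : ideal_pow J 1 `<=` J.
    apply: smallest_sub; first exact: meet_maximals_rideal J_meet.
    by move=> _ [s _ [y Jy <-]]; apply: radical_mull.
  by apply: subset_trans J1; apply: (subset_seq_ge powJ_down) (ltn0Sn k).
have Jkk : ideal_pow J (k.+1 + k.+1) = ideal_pow J k.+1.
  by rewrite !Jk // (leq_trans (leqnSn k) (leq_addr k.+1 k.+1)).
by rewrite -{1}Jkk; apply: ideal_pow_add radical_mull.
Qed.

Lemma radical_layer_chain n : comp_chain (ideal_pow J n.+1) (ideal_pow J n).
Proof.
apply: semisimple_comp_chain; try exact: rideal_pow.
  exact: ideal_mul_subl (rideal_pow J n).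
move=> x xn; have xJ j : J j -> ideal_pow J n.+1 (x * j) by apply: ideal_mul_mem.
by apply: simple_span_meet J_meet xn xJ; apply: rideal_pow.
Qed.

End Radical.

Lemma artinian_comp_chain : comp_chain [set 0] [set: S].
Proof.
have [J J_meet J_sub] := exists_radical.
have [k Jk] := radical_nilpotent J_meet J_sub.
suff chain n : comp_chain (ideal_pow J n) setT by rewrite -Jk.
elim: n => [|n IH]; first exact: comp_chain_refl (rideal_setT S).
exact: comp_chain_trans (radical_layer_chain J_meet n) IH.
Qed.

End Artinian.

Lemma artinian_noetherian (S : pzRingType) : right_artinian S -> right_noetherian S.
Proof.
move=> artS I Iid Iup.
have I0 n : [set 0] `<=` I n by move=> _ ->; apply: rideal0 (Iid n).
have [k Ik] := comp_chain_acc (artinian_comp_chain artS) Iid Iup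
  (fun n => conj (I0 n) (@subsetT _ _)).
by exists k => n /Ik ->.
Qed.

Lemma factor_artinian (R S : pzRingType) (f : {rmorphism R -> S}) :
  factor_ring f -> right_artinian R -> right_artinian S.
Proof.
move=> f_onto artR I Iid Idown.
have preim_id n : right_ideal (f @^-1` I n).
  have [I0 ID IM] := Iid n.
  split=> [|x y|x r] /=; rewrite ?rmorph0 ?rmorphD ?rmorphM //; [exact: ID|exact: IM].
have [k Ik] := artR _ preim_id (fun n r => Idown n (f r)).
by exists k => n kn s; have [r <-] := f_onto s; apply: Ik.
Qed.

(** * Injective modules *)

Section RightModules.
Variable S : pzRingType.
Local Notation regular := ((S^c)^o : lmodType S^c).
Implicit Types A B E M : lmodType S^c.

Lemma rhom0 A B (f : A -> B) : rhom f -> f 0 = 0.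
Proof.
move=> lf; have := lf 1 0 0; rewrite !scale1r addr0 => f0.
by apply: (@addrI _ (f 0)); rewrite addr0 -f0.
Qed.

Lemma rhomZ A B (f : A -> B) c u : rhom f -> f (c *: u) = c *: f u.
Proof. by move=> lf; have := lf c u 0; rewrite !addr0 (rhom0 lf) addr0. Qed.

Lemma rhom_comp A B M (f : A -> B) (g : B -> M) : rhom f -> rhom g -> rhom (g \o f).
Proof. by move=> lf lg c u v /=; rewrite lf lg. Qed.

Lemma injective_retract E M (p : E -> M) (i : M -> E) : injective_module E ->
  rhom p -> rhom i -> (forall m, p (i m) = m) -> injective_module M.
Proof.
move=> Einj lp li pi A B f g lf f_inj lg.
have [h [lh hf]] := Einj A B f (i \o g) lf f_inj (rhom_comp lg li).
by exists (p \o h); split=> [|a /=]; [exact: rhom_comp|rewrite hf pi].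
Qed.

Lemma injective_prod E1 E2 : injective_module E1 -> injective_module E2 ->
  injective_module ((E1 * E2)%type : lmodType S^c).
Proof.
move=> E1inj E2inj A B f g lf f_inj lg.
have [h1 [lh1 h1f]] :=
  E1inj A B f (fst \o g) lf f_inj (fun c u v => congr1 fst (lg c u v)).
have [h2 [lh2 h2f]] :=
  E2inj A B f (snd \o g) lf f_inj (fun c u v => congr1 snd (lg c u v)).
exists (fun b => (h1 b, h2 b)); split=> [c u v|a]; first by rewrite lh1 lh2.
by rewrite h1f h2f /=; case: (g a).
Qed.

Lemma regular_section E (p : E -> regular) e : rhom p -> p e = 1 ->
  exists2 i : regular -> E, rhom i & forall a, p (i a) = a.
Proof.
move=> lp pe; exists (fun a => (a : S^c) *: e) => [c u v|a].
  have -> : ((c *: u + v : regular) : S^c) = c * (u : S^c) + v by [].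
  by rewrite scalerDl scalerA.
by rewrite (rhomZ _ _ lp) pe; apply: mulr1.
Qed.

Lemma self_injective_of_regular_image :
  image_of_injective regular -> right_self_injective S.
Proof.
move=> [E [p [Einj [lp p_onto]]]]; have [e pe] := p_onto 1.
have [i li pi] := regular_section lp pe.
exact: injective_retract Einj lp li pi.
Qed.

Lemma submodule_regular (N : set S) : submodule (N : set regular) <-> right_ideal N.
Proof. by split=> -[N0 ND NZ]; split=> // x a; apply: NZ. Qed.

Lemma artinian_regular_finite_length : right_artinian S -> finite_length regular.
Proof.
move=> artS.
have [n [C [Cid C0 Cn Ccov]]] := comp_chain_series (artinian_comp_chain artS).
exists n, C; split=> [i||x|i lt_in]; first exact/submodule_regular.
- by rewrite C0.
- by rewrite Cn.
have [_ _ [CC' nC'C] Cmax] := Ccov i lt_in.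
split=> // N /submodule_regular Nid CN NC'.
by case: (Cmax N Nid CN NC') => ->; [left|right].
Qed.

Fixpoint span M (xs : seq M) : set M :=
  if xs is x :: xs then [set a *: x + m | a in [set: S^c] & m in span xs]
  else [set 0].

Lemma submodule_adjoin M (C : set M) x : submodule C ->
  submodule [set a *: x + c | a in [set: S^c] & c in C].
Proof.
move=> [C0 CD CZ]; split.
- by exists 0 => //; exists 0 => //; rewrite scale0r addr0.
- move=> _ _ [a _ [c Cc <-]] [a' _ [c' Cc' <-]]; exists (a + a') => //.
  by exists (c + c'); [apply: CD|rewrite scalerDl addrACA].
- move=> b _ [a _ [c Cc <-]]; exists (b * a) => //.
  by exists (b *: c); [apply: CZ|rewrite scalerDr scalerA].
Qed.

Lemma finite_length_span M : finite_length M -> exists xs : seq M, span xs = setT.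
Proof.
move=> [n [C [Csub C0 Cn Cstep]]].
suff Cspan i : (i <= n)%N -> exists xs : seq M, C i `<=` span xs.
  have [xs Cxs] := Cspan n (leqnn n).
  by exists xs; apply/seteqP; split=> // m _; apply/Cxs/Cn.
elim: i => [_|i IH lt_in]; first by exists [::] => m /C0.
have [xs Cxs] := IH (ltnW lt_in).
have [CC' nC'C Cmax] := Cstep i lt_in.
have [x C'x nCx] : exists2 x, C i.+1 x & ~ C i x.
  apply: contrapT => none; apply: nC'C => x C'x.
  by apply: contrapT => nCx; apply: none; exists x.
pose N := [set a *: x + c | a in [set: S^c] & c in C i].
have [_ C'D C'Z] := Csub i.+1.
have CN : C i `<=` N.
  by move=> c Cc; exists 0 => //; exists c => //; rewrite scale0r add0r.
have NC' : N `<=` C i.+1.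
  by move=> _ [a _ [c /CC' C'c <-]]; apply: C'D => //; apply: C'Z.
case: (Cmax N (submodule_adjoin x (Csub i)) CN NC') => [N_C|N_C'].
  case: nCx; apply/N_C; exists 1 => //.
  by exists 0; [case: (Csub i)|rewrite scale1r addr0].
exists (x :: xs) => m /N_C'[a _ [c Cc <-]]; exists a => //; exists c => //.
exact: Cxs.
Qed.

Lemma span_image_of_injective M (xs : seq M) : right_self_injective S ->
  exists E (p : E -> M), [/\ injective_module E, rhom p & span xs `<=` range p].
Proof.
move=> Sinj; elim: xs => [|x xs [E [p [Einj lp sp]]]].
  exists regular, (fun=> 0); split=> // [c u v|_ ->]; first by rewrite scaler0 addr0.
  by exists 0.
exists ((regular * E)%type : lmodType S^c), (fun ae => (ae.1 : S^c) *: x + p ae.2).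
split; first exact: injective_prod.
  move=> c [a e] [a' e'] /=; rewrite lp.
  have -> : ((c *: a + a' : regular) : S^c) = c * (a : S^c) + a' by [].
  by rewrite scalerDl scalerDr scalerA addrACA.
by move=> _ [a _ [m /sp[e _ <-] <-]]; exists (a : regular, e).
Qed.

Lemma self_injective_fl_images : right_self_injective S -> fl_images_of_injectives S.
Proof.
move=> Sinj M /finite_length_span[xs xsT].
have [E [p [Einj lp sp]]] := span_image_of_injective xs Sinj.
exists E, p; split=> //; split=> // m.
have [e _ <-] : range p m by apply: sp; rewrite xsT.
by exists e.
Qed.

End RightModules.

Unset Implicit Arguments.

Theorem mainTheorem15 (R : pzRingType) :
  right_artinian R ->
  ((forall (S : pzRingType) (f : {rmorphism R -> S}),
       factor_ring f -> fl_images_of_injectives S)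
   <->
   (forall (S : pzRingType) (f : {rmorphism R -> S}),
       factor_ring f -> QF S)).
Proof.
move=> artR; split=> images S f f_onto.
  have artS := factor_artinian f_onto artR.
  split; first exact: artinian_noetherian.
  exact/self_injective_of_regular_image/images/artinian_regular_finite_length.
exact/self_injective_fl_images/(images S f f_onto).2.
Qed.
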